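(* Let $\mathbb{K}\in\{\mathbb{R},\mathbb{C}\}$, let $B$ be a commutative Banach algebra over $\mathbb{K}$, $(\omega_k)_{k\in\mathbb{N}}$ a convex growth family and $(\mathcal{H},\Sigma)$ a combinatorial Hopf algebra such that $((\mathcal{H},\Sigma),(\omega_k)_k)$ is a control pair. Then the space $\ell^\infty_{\rightarrow}(\mathcal{H},B)$ of controlled linear maps is a locally convex unital topological algebra with respect to the convolution product $\phi\star\psi=m_B\circ(\phi\otimes\psi)\circ\Delta$, with unit $1_B\cdot\epsilon$.
   Context: A growth family is a family $(\omega_k)_{k\in\mathbb{N}}$ of functions $\omega_k\colon\mathbb{N}_0\to\mathbb{N}$ with (W1) $\omega_k(0)=1$, $\omega_k(n)\le\omega_{k+1}(n)$; (W2) $\omega_k(n)\omega_k(m)\le\omega_k(n+m)$; (W3) for every $k_1$ there is $k_2\ge k_1$ with $\omega_{k_2}(n)\ge2^n\omega_{k_1}(n)$ for all $n$; convex means: for each $k_1$ one can choose such $k_2$ so that additionally for every $k_3\ge k_2$ some $\alpha\in]0,1[$ satisfies $\omega_{k_1}(n)^\alpha\omega_{k_3}(n)^{1-\alpha}\le\omega_{k_2}(n)$ for all $n$. For a set $J$ graded by $|\cdot|\colon J\to\mathbb{N}_0$: $\ell^1_k(J)$ = formal sums $\sum c_\tau\tau$ with $\sum|c_\tau|\omega_k(|\tau|)<\infty$, $\ell^1_{\leftarrow}(J)=\bigcap_k\ell^1_k(J)$ (projective limit topology); $\ell^\infty_k(J,B)$ = maps $f\colon J\to B$ with $\sup_\tau\|f(\tau)\|/\omega_k(|\tau|)<\infty$,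 $\ell^\infty_{\rightarrow}(J,B)=\bigcup_k\ell^\infty_k(J,B)$ with direct limit topology. A commutative Banach algebra is unital, commutative, with complete submultiplicative norm and $\|1_B\|=1$. A combinatorial Hopf algebra $(\mathcal{H},\Sigma)$ is a graded connected Hopf algebra $\mathcal{H}$ over $\mathbb{K}$ (coproduct $\Delta$, counit $\epsilon$, antipode $S$) together with $\Sigma\subseteq\mathcal{H}$ such that $\mathcal{H}$ is as an algebra (via a fixed isomorphism) the commutative polynomial algebra $\mathbb{K}[\Sigma]$ or the noncommutative polynomial algebra $\mathbb{K}\langle\Sigma\rangle$, $\Sigma$ graded by the Hopf grading. Let $M$ be the free commutative monoid resp. free monoid on $\Sigma$ (graded by sums of degrees), so $\mathcal{H}=\mathbb{K}^{(M)}$ and $\mathcal{H}\otimes\mathcal{H}=\mathbb{K}^{(M\times M)}$ with $|(\mu,\sigma)|=|\mu|+|\sigma|$. $((\mathcal{H},\Sigma),(\omega_k))$ is a control pair if $\Delta$ and $S$ extend to continuous linear maps $\ell^1_{\leftarrow}(M)\to\ell^1_{\leftarrow}(M\times M)$ resp. $\ell^1_{\leftarrow}(M)\to\ell^1_{\leftarrow}(M)$. A linear map $\phi\colon\mathcal{H}\to B$ is controlled if $\phi|_M\in\ell^\infty_{\rightarrow}(M,B)$; the space $\ell^\infty_{\rightarrow}(\mathcal{H},B)$ of controlled linear maps is identified with $\ell^\infty_{\rightarrow}(M,B)$ as a locally convex space. *)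

From HB Require Import structures.
From mathcomp Require Import all_boot all_order all_algebra.
From mathcomp Require Import all_classical all_reals all_analysis.
From mathcomp Require Import complex.
From mathcomp Require Import finmap multiset.

Set Implicit Arguments.
Unset Strict Implicit.
Unset Printing Implicit Defensive.

Import Order.TTheory GRing.Theory Num.Theory.
Local Open Scope ring_scope.
Local Open Scope classical_set_scope.

Definition scal_field (R : realType) (cplx : bool) : numFieldType :=
  if cplx then (R[i] : numFieldType) else (R : numFieldType).

Definition knorm (R : realType) (cplx : bool) : scal_field R cplx -> R :=
  match cplx return scal_field R cplx -> R with
  | true => fun z : R[i] => complex.Re `|z|
  | false => fun x : R => `|x|
  end.

(* w k n stands for omega_k(n); omega_k : N_0 -> N = {1,2,...}.        *)
Definition growth_family (w : nat -> nat -> nat) : Prop :=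
  [/\ (forall k n, (0 < w k n)%N),
      (forall k, w k 0%N = 1%N),
      (forall k n, (w k n <= w k.+1 n)%N),
      (forall k n m, (w k n * w k m <= w k (n + m))%N)
    & (forall k1, exists k2, (k1 <= k2)%N /\
          forall n, (2 ^ n * w k1 n <= w k2 n)%N) ].

Definition convex_growth (R : realType) (w : nat -> nat -> nat) : Prop :=
  forall k1, exists k2, [/\ (k1 <= k2)%N,
    (forall n, (2 ^ n * w k1 n <= w k2 n)%N) &
    forall k3, (k2 <= k3)%N -> exists alpha : R, 0 < alpha < 1 /\
      forall n, ((w k1 n)%:R `^ alpha * (w k3 n)%:R `^ (1 - alpha)
                 <= (w k2 n)%:R :> R) ].

Section L1.
Variables (R : realType) (cplx : bool).
Local Notation K := (scal_field R cplx).
Variables (J : choiceType) (gr : J -> nat) (w : nat -> nat -> nat).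

Definition l1norm (k : nat) (c : J -> K) : \bar R :=
  (\esum_(t in [set: J]) ((knorm (c t)) * (w k (gr t))%:R)%:E)%E.

Definition in_l1 (k : nat) (c : J -> K) : Prop := (l1norm k c < +oo)%E.

Definition in_l1_proj (c : J -> K) : Prop := forall k, in_l1 k c.

(* finitely supported formal sums = elements of K^(J) *)
Definition fin_supp (c : J -> K) : Prop := finite_set [set t | c t != 0].
End L1.

(* A linear map K^(J1) -> K^(J2) given on the basis J1 by the coefficient
   function f (f t u = coefficient of u in the image of t) extends to a
   continuous linear map l^1_<-(J1) -> l^1_<-(J2) (projective limit
   topologies; since the norms ||.||_k increase with k, the sets
   {c' | ||c' - c||_k < d} form a neighbourhood base of c).              *)
Definition extends_continuously (R : realType) (cplx : bool)
  (J1 J2 : choiceType) (gr1 : J1 -> nat) (gr2 : J2 -> nat)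
  (w : nat -> nat -> nat) (f : J1 -> J2 -> scal_field R cplx) : Prop :=
  exists T : (J1 -> scal_field R cplx) -> (J2 -> scal_field R cplx),
  [/\ (forall c, in_l1_proj gr1 w c -> in_l1_proj gr2 w (T c)),
      (forall a c c', in_l1_proj gr1 w c -> in_l1_proj gr1 w c' ->
         T (fun t => a * c t + c' t) = (fun u => a * T c u + T c' u)),
      (forall h, fin_supp h ->
         T h = (fun u => \sum_(t \in [set: J1]) h t * f t u)) &
      (forall c k (e : R), in_l1_proj gr1 w c -> 0 < e ->
         exists k' (d : R), 0 < d /\
         forall c', in_l1_proj gr1 w c' ->
           (l1norm gr1 w k' (fun t => (c' t - c t)%R) < d%:E)%E ->
           (l1norm gr2 w k (fun u => (T c' u - T c u)%R) < e%:E)%E) ].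

(* The monoid M: free commutative monoid (comm = true, multisets) or   *)
(* free monoid (comm = false, words) on the set Sigma of generators.   *)
Definition mon (comm : bool) (S : choiceType) : choiceType :=
  if comm then ({mset S}%mset : choiceType) else (seq S : choiceType).

Definition mon_one (comm : bool) (S : choiceType) : mon comm S :=
  match comm return mon comm S with
  | true => (mset0 : {mset S}%mset)
  | false => ([::] : seq S)
  end.

Definition mon_mul (comm : bool) (S : choiceType) :
  mon comm S -> mon comm S -> mon comm S :=
  match comm return mon comm S -> mon comm S -> mon comm S with
  | true => fun a b : {mset S}%mset => msetD a b
  | false => fun a b : seq S => a ++ b
  end.

Definition mon_deg (comm : bool) (S : choiceType) (deg : S -> nat) :
  mon comm S -> nat :=
  match comm return mon comm S -> nat with
  | true => fun A : {mset S}%mset => (\sum_(x <- finsupp A) A x * deg x)%N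
  | false => fun s : seq S => (\sum_(x <- s) deg x)%N
  end.

(* Combinatorial Hopf algebra (H, Sigma), H = K[Sigma] or K<Sigma>     *)
(* with basis M.  Structure maps given by their matrices on M:          *)
(*   Delta(mu) = sum_{nu,sg} D mu nu sg  nu (x) sg                      *)
(*   eps(mu)   = ep mu                                                  *)
(*   S(mu)     = sum_rho Sa mu rho  rho                                 *)
Definition indK (K : numFieldType) (b : bool) : K := b%:R.

Section Hopf.
Variables (K : numFieldType) (comm : bool) (S : choiceType) (deg : S -> nat).
Local Notation M := (mon comm S).
Local Notation one := (mon_one comm S).
Local Notation mul := (@mon_mul comm S).
Local Notation dg := (@mon_deg comm S deg).
Local Notation ind := (@indK K).

Definition comb_hopf (D : M -> M -> M -> K) (ep : M -> K) (Sa : M -> M -> K)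
  : Prop :=
  (   (* Delta, S take values in K^(M x M), K^(M) *)
   (forall mu, finite_set [set p : M * M | D mu p.1 p.2 != 0]) /\
   (forall mu, finite_set [set r : M | Sa mu r != 0]) /\
   (forall mu a b c, \sum_(n \in [set: M]) D mu n c * D n a b
                   = \sum_(s \in [set: M]) D mu a s * D s b c) /\
   (forall mu s, \sum_(n \in [set: M]) ep n * D mu n s = ind (s == mu))
     /\ (forall mu n, \sum_(s \in [set: M]) D mu n s * ep s = ind (n == mu)) /\
   (* Delta is an algebra morphism H -> H (x) H *)
   (forall mu mu' a b, D (mul mu mu') a b =
      \sum_(n \in [set: M]) \sum_(s \in [set: M]) \sum_(n' \in [set: M])
        \sum_(s' \in [set: M])
          D mu n s * D mu' n' s' * ind ((mul n n' == a) && (mul s s' == b)))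
     /\ (forall a b, D one a b = ind ((a == one) && (b == one))) /\
   (forall mu mu', ep (mul mu mu') = ep mu * ep mu') /\ ep one = 1 /\
   (* antipode: m (S (x) id) Delta = eta eps = m (id (x) S) Delta *)
   (forall mu c,
      \sum_(n \in [set: M]) \sum_(s \in [set: M])
         D mu n s * (\sum_(r \in [set: M]) Sa n r * ind (mul r s == c))
      = ep mu * ind (c == one))
     /\ (forall mu c,
      \sum_(n \in [set: M]) \sum_(s \in [set: M])
         D mu n s * (\sum_(r \in [set: M]) Sa s r * ind (mul n r == c))
      = ep mu * ind (c == one)) /\
   (forall mu n s, D mu n s != 0 -> (dg n + dg s)%N = dg mu) /\
   (forall mu, ep mu != 0 -> dg mu = 0%N) /\
   (* connected: H_0 = K 1 *)
   (forall mu, dg mu = 0%N -> mu = one)).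
End Hopf.

Definition comm_banach_alg (K : numFieldType) (B : completeNormedModType K)
  (mul : B -> B -> B) (one : B) : Prop :=
  [/\ associative mul, commutative mul, left_id one mul,
      (forall (a : K) x y z, mul (a *: x + y) z = a *: mul x z + mul y z) &
      (forall x y, `|mul x y| <= `|x| * `|y|) /\ `|one| = 1 ].

Section Controlled.
Variables (K : numFieldType) (M : choiceType) (gr : M -> nat)
  (w : nat -> nat -> nat) (B : normedModType K).

Definition bounded_by (k : nat) (C : K) (f : M -> B) : Prop :=
  forall t, `|f t| <= C * (w k (gr t))%:R.

Definition controlled (f : M -> B) : Prop := exists k C, bounded_by k C f.

Definition abs_convex (V : set (M -> B)) : Prop :=
  forall (a b : K) f g, V f -> V g -> `|a| + `|b| <= 1 ->
    V (fun t => a *: f t + b *: g t).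

(* U is a 0-neighbourhood of the locally convex inductive (direct) limit
   topology on l^oo_->(M,B): U contains an absolutely convex subset V of
   l^oo_->(M,B) whose trace on every step l^oo_k(M,B) contains a ball.  *)
Definition ind_nbhd0 (U : set (M -> B)) : Prop :=
  exists V : set (M -> B), [/\ V `<=` U, V `<=` controlled, abs_convex V &
    forall k, exists e : K, 0 < e /\ forall f, bounded_by k e f -> V f ].
End Controlled.

Section Conv.
Variables (K : numFieldType) (M : choiceType) (B : normedModType K)
  (D : M -> M -> M -> K) (mulB : B -> B -> B).

Definition hconv (phi psi : M -> B) : M -> B :=
  fun mu => \sum_(p \in [set: M * M]) D mu p.1 p.2 *: mulB (phi p.1) (psi p.2).
End Conv.

Definition lc_unital_top_alg (K : numFieldType) (M : choiceType)
  (gr : M -> nat) (w : nat -> nat -> nat) (B : normedModType K)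
  (star : (M -> B) -> (M -> B) -> (M -> B)) (e : M -> B) : Prop :=
  let E := controlled gr w (B := B) in
  [/\ (forall f g, E f -> E g -> E (star f g)) /\ E e,
      (forall f g h, E f -> E g -> E h -> star (star f g) h = star f (star g h)),
      (forall f, E f -> star e f = f /\ star f e = f),
      ((forall (a : K) f f' g, E f -> E f' -> E g ->
         star (fun t => a *: f t + f' t) g
         = (fun t => a *: star f g t + star f' g t)) /\
      (forall (a : K) f g g', E f -> E g -> E g' ->
         star f (fun t => a *: g t + g' t)
         = (fun t => a *: star f g t + star f g' t))) &
      (forall f g, E f -> E g -> forall W, ind_nbhd0 gr w W ->
         exists U V, [/\ ind_nbhd0 gr w U, ind_nbhd0 gr w V &
           forall u v, E u -> E v -> U u -> V v ->
             W (fun t => star (fun x => f x + u x) (fun x => g x + v x) t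
                         - star f g t)]) ].

From HB Require Import structures.
From mathcomp Require Import all_boot all_order all_algebra.
From mathcomp Require Import all_classical all_reals all_analysis.
From mathcomp Require Import complex.
From mathcomp Require Import finmap multiset.
From mathcomp Require Import ring lra.
Import Order.TTheory GRing.Theory Num.Theory.
Local Open Scope ring_scope.
Local Open Scope classical_set_scope.

(** Since every coproduct [Delta(mu)] is a finite sum, the convolution is given
    by finite sums, and bilinearity, associativity and the unit laws are the
    algebraic identities dual to bilinearity of [m_B], coassociativity and the
    counit laws.  Continuity of the extension of [Delta] at [0], tested on small
    multiples of a single monomial [mu], bounds the coefficients of [Delta(mu)]:
    [sum |D mu n s| w_k(n) w_k(s) <= C_k w_k'(mu)] (using (W2)).  Hence [*] maps
    [l^oo_k x l^oo_k] boundedly into [l^oo_k'].  Joint continuity for the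
    inductive limit topology then follows from
    [(f + u) * (g + v) - f * g = f * v + u * g + u * v] and a choice of radii
    [a_k <= 1] with [a_k * a_l] small at level [max k l]. *)

Set Implicit Arguments.
Unset Strict Implicit.
Unset Printing Implicit Defensive.

Section FiniteSupportSums.
Variable V : nmodType.

Lemma fsbig_setT_seq (T : choiceType) (r : seq T) (F : T -> V) :
  uniq r -> (forall i, F i != 0 -> i \in r) ->
  \sum_(i \in [set: T]) F i = \sum_(i <- r) F i.
Proof.
move=> ur Fr; rewrite (fsbigE r) //; last first.
  by move=> i _; apply: contraNeq; apply: Fr.
by apply: eq_bigl => i; rewrite in_setT.
Qed.

Lemma fsbig_setT_pair_seq (T : choiceType) (r : seq T) (F : T -> T -> V) :
  uniq r -> (forall n s, F n s != 0 -> (n \in r) && (s \in r)) ->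
  \sum_(p \in [set: T * T]) F p.1 p.2 = \sum_(n <- r) \sum_(s <- r) F n s.
Proof.
move=> ur Fr; rewrite -(big_allpairs (F := fun p => F p.1 p.2)).
apply: (fsbig_setT_seq (F := fun p => F p.1 p.2)).
  by apply: allpairs_uniq => // -[? ?] [? ?] _ _ [-> ->].
by move=> [n s] /Fr /andP[nr sr]; apply/allpairsP; exists (n, s).
Qed.

Lemma exchange_big_rot (I : Type) (r1 r2 r3 : seq I) (F : I -> I -> I -> V) :
  \sum_(x <- r1) \sum_(y <- r2) \sum_(z <- r3) F x y z =
  \sum_(y <- r2) \sum_(z <- r3) \sum_(x <- r1) F x y z.
Proof. by rewrite exchange_big; apply: eq_bigr => y _; rewrite exchange_big. Qed.

End FiniteSupportSums.

Section CoproductSupport.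
Variables (K : numFieldType) (M : choiceType) (D : M -> M -> M -> K).
Hypothesis D_fin : forall mu, finite_set [set p : M * M | D mu p.1 p.2 != 0].

Definition hsupp mu : seq M :=
  undup (flatten [seq [:: p.1; p.2] |
                  p <- fset_set [set p : M * M | D mu p.1 p.2 != 0]]).

Lemma hsupp_uniq mu : uniq (hsupp mu).
Proof. exact: undup_uniq. Qed.

Lemma hsupp_coef mu n s : D mu n s != 0 -> (n \in hsupp mu) && (s \in hsupp mu).
Proof.
move=> Dnz; have ns : (n, s) \in fset_set [set p : M * M | D mu p.1 p.2 != 0].
  by rewrite in_fset_set ?mem_setE //; apply: D_fin.
by rewrite !mem_undup; apply/andP; split; apply/flattenP;
  exists [:: n; s]; rewrite ?inE ?eqxx ?orbT //; apply: (map_f _ ns).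
Qed.

Lemma hsupp_closure mu : exists U : seq M, [/\ uniq U, {subset hsupp mu <= U} &
  forall n, n \in hsupp mu -> {subset hsupp n <= U}].
Proof.
exists (undup (hsupp mu ++ flatten [seq hsupp n | n <- hsupp mu])).
split=> [|n nmu|n nmu m mn]; rewrite ?undup_uniq // mem_undup mem_cat ?nmu //.
by apply/orP; right; apply/flattenP; exists (hsupp n); rewrite ?map_f.
Qed.

Variables (B : normedModType K) (mulB : B -> B -> B).
Local Notation star := (hconv D mulB).

Lemma hconv_seqE (U : seq M) (f g : M -> B) mu : uniq U -> {subset hsupp mu <= U} ->
  star f g mu = \sum_(n <- U) \sum_(s <- U) D mu n s *: mulB (f n) (g s).
Proof.
move=> uU supU; apply: fsbig_setT_pair_seq => // n s.
have [->|/hsupp_coef/andP[/supU -> /supU -> //]] := eqVneq (D mu n s) 0.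
by rewrite scale0r eqxx.
Qed.

Lemma hconvE (f g : M -> B) mu :
  star f g mu = \sum_(n <- hsupp mu) \sum_(s <- hsupp mu) D mu n s *: mulB (f n) (g s).
Proof. exact: hconv_seqE (hsupp_uniq mu) _. Qed.

End CoproductSupport.

Section CommutativeProduct.
Variables (K : numFieldType) (B : lmodType K) (mulB : B -> B -> B).
Hypothesis mulBC : commutative mulB.
Hypothesis mulB_linear :
  forall (a : K) x y z, mulB (a *: x + y) z = a *: mulB x z + mulB y z.

Lemma mulB0l z : mulB 0 z = 0.
Proof.
have := mulB_linear 1 0 0 z; rewrite !scale1r addr0 => h.
by apply: (addrI (mulB 0 z)); rewrite addr0 -h.
Qed.

Lemma mulBDl x y z : mulB (x + y) z = mulB x z + mulB y z.
Proof. by rewrite -[x in LHS]scale1r mulB_linear scale1r. Qed.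

Lemma mulBZl a x z : mulB (a *: x) z = a *: mulB x z.
Proof. by rewrite -[_ *: x]addr0 mulB_linear mulB0l addr0. Qed.

Lemma mulBZr a x z : mulB z (a *: x) = a *: mulB z x.
Proof. by rewrite mulBC mulBZl mulBC. Qed.

Lemma mulB_suml (I : Type) (r : seq I) (F : I -> B) z :
  mulB (\sum_(i <- r) F i) z = \sum_(i <- r) mulB (F i) z.
Proof. exact: (big_morph (mulB^~ z) (fun x y => mulBDl x y z) (mulB0l z)). Qed.

Lemma mulB_sumr (I : Type) (r : seq I) (F : I -> B) z :
  mulB z (\sum_(i <- r) F i) = \sum_(i <- r) mulB z (F i).
Proof. by rewrite mulBC mulB_suml; apply: eq_bigr => i _; rewrite mulBC. Qed.

End CommutativeProduct.

Lemma sum_indK_scale (K : numFieldType) (V : lmodType K) (I : eqType)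
    (r : seq I) (x : I) (F : I -> V) :
  uniq r -> x \in r -> \sum_(i <- r) indK K (i == x) *: F i = F x.
Proof.
move=> ur xr; rewrite (bigD1_seq x) //= eqxx scale1r big1 ?addr0 //.
by move=> i /negbTE ->; rewrite scale0r.
Qed.

Section ConvolutionBilinear.
Variables (K : numFieldType) (M : choiceType) (B : normedModType K).
Variable mulB : B -> B -> B.
Hypothesis mulBC : commutative mulB.
Hypothesis mulB_linear :
  forall (a : K) x y z, mulB (a *: x + y) z = a *: mulB x z + mulB y z.
Variable D : M -> M -> M -> K.
Hypothesis D_fin : forall mu, finite_set [set p : M * M | D mu p.1 p.2 != 0].

Local Notation star := (hconv D mulB).

Lemma hconv_linear_l (a b : K) x y z :
  star (fun t => a *: x t + b *: y t) z = fun mu => a *: star x z mu + b *: star y z mu.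
Proof.
apply: funext => mu; rewrite !(hconvE D_fin).
rewrite !scaler_sumr -big_split; apply: eq_bigr => n _.
rewrite !scaler_sumr -big_split; apply: eq_bigr => s _.
by rewrite (mulBDl mulB_linear) !(mulBZl mulB_linear) scalerDr !scalerA (mulrC a) (mulrC b).
Qed.

Lemma hconv_linear_r (a b : K) x y z :
  star z (fun t => a *: x t + b *: y t) = fun mu => a *: star z x mu + b *: star z y mu.
Proof.
apply: funext => mu; rewrite !(hconvE D_fin).
rewrite !scaler_sumr -big_split; apply: eq_bigr => n _.
rewrite !scaler_sumr -big_split; apply: eq_bigr => s _.
rewrite mulBC (mulBDl mulB_linear) !(mulBZl mulB_linear) !(mulBC _ (z n)).
by rewrite scalerDr !scalerA (mulrC a) (mulrC b).
Qed.

Lemma hconvDl x y z :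
  star (fun t => x t + y t) z = fun mu => star x z mu + star y z mu.
Proof.
apply: funext => mu; rewrite !(hconvE D_fin) -big_split; apply: eq_bigr => n _.
by rewrite -big_split; apply: eq_bigr => s _; rewrite (mulBDl mulB_linear) scalerDr.
Qed.

Lemma hconvDr x y z :
  star z (fun t => x t + y t) = fun mu => star z x mu + star z y mu.
Proof.
apply: funext => mu; rewrite !(hconvE D_fin) -big_split; apply: eq_bigr => n _.
rewrite -big_split; apply: eq_bigr => s _.
by rewrite mulBC (mulBDl mulB_linear) scalerDr !(mulBC _ (z n)).
Qed.

Lemma hconvZDl a x y z :
  star (fun t => a *: x t + y t) z = fun mu => a *: star x z mu + star y z mu.
Proof.
transitivity (star (fun t => a *: x t + 1 *: y t) z).
  by congr (star _ z); apply: funext => t; rewrite scale1r.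
by rewrite hconv_linear_l; apply: funext => mu; rewrite scale1r.
Qed.

Lemma hconvZDr a x y z :
  star z (fun t => a *: x t + y t) = fun mu => a *: star z x mu + star z y mu.
Proof.
transitivity (star z (fun t => a *: x t + 1 *: y t)).
  by congr (star z _); apply: funext => t; rewrite scale1r.
by rewrite hconv_linear_r; apply: funext => mu; rewrite scale1r.
Qed.

End ConvolutionBilinear.

Section HopfConvolution.
Variables (K : numFieldType) (M : choiceType) (B : normedModType K).
Variables (mulB : B -> B -> B) (oneB : B).
Hypothesis mulBA : associative mulB.
Hypothesis mulBC : commutative mulB.
Hypothesis mul1B : left_id oneB mulB.
Hypothesis mulB_linear :
  forall (a : K) x y z, mulB (a *: x + y) z = a *: mulB x z + mulB y z.
Variables (D : M -> M -> M -> K) (ep : M -> K).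
Hypothesis D_fin : forall mu, finite_set [set p : M * M | D mu p.1 p.2 != 0].
Hypothesis coassoc : forall mu a b c,
  \sum_(n \in [set: M]) D mu n c * D n a b = \sum_(s \in [set: M]) D mu a s * D s b c.
Hypothesis counit_l :
  forall mu s, \sum_(n \in [set: M]) ep n * D mu n s = indK K (s == mu).
Hypothesis counit_r :
  forall mu n, \sum_(s \in [set: M]) D mu n s * ep s = indK K (n == mu).

Local Notation star := (hconv D mulB).
Local Notation hsupp := (hsupp D).
Local Notation epB := (fun mu => ep mu *: oneB).

Lemma hconv1l f : star epB f = f.
Proof.
apply: funext => mu; set U := undup (mu :: hsupp mu).
have uU : uniq U := undup_uniq _.
have supU : {subset hsupp mu <= U} by move=> n nmu; rewrite mem_undup inE nmu orbT.
rewrite (hconv_seqE D_fin mulB _ _ uU supU) exchange_big /=.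
rewrite -[RHS](sum_indK_scale f uU) ?mem_undup ?mem_head //.
apply: eq_bigr => s _; rewrite -(counit_l mu s) (fsbig_setT_seq (r := U)) //.
  rewrite scaler_suml; apply: eq_bigr => n _.
  by rewrite (mulBZl mulB_linear) mul1B scalerA mulrC.
by move=> n; rewrite mulf_eq0 negb_or => /andP[_ /(hsupp_coef D_fin)/andP[/supU]].
Qed.

Lemma hconv1r f : star f epB = f.
Proof.
apply: funext => mu; set U := undup (mu :: hsupp mu).
have uU : uniq U := undup_uniq _.
have supU : {subset hsupp mu <= U} by move=> n nmu; rewrite mem_undup inE nmu orbT.
rewrite (hconv_seqE D_fin mulB _ _ uU supU).
rewrite -[RHS](sum_indK_scale f uU) ?mem_undup ?mem_head //.
apply: eq_bigr => n _; rewrite -(counit_r mu n) (fsbig_setT_seq (r := U)) //.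
  rewrite scaler_suml; apply: eq_bigr => s _.
  by rewrite (mulBZr mulBC mulB_linear) mulBC mul1B scalerA.
by move=> s; rewrite mulf_eq0 negb_or => /andP[/(hsupp_coef D_fin)/andP[_ /supU]].
Qed.

Section Associativity.
Variables (f g h : M -> B) (mu : M) (U : seq M).
Hypothesis uU : uniq U.
Hypothesis supU : {subset hsupp mu <= U}.
Hypothesis supU2 : forall n, n \in hsupp mu -> {subset hsupp n <= U}.

Lemma hconvA_expand_l : star (star f g) h mu =
  \sum_(a <- U) \sum_(b <- U) \sum_(c <- U)
    (\sum_(n <- U) D mu n c * D n a b) *: mulB (mulB (f a) (g b)) (h c).
Proof.
have expand n c : D mu n c *: mulB (star f g n) (h c) = \sum_(a <- U) \sum_(b <- U)
    (D mu n c * D n a b) *: mulB (mulB (f a) (g b)) (h c).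
  have [->|/(hsupp_coef D_fin)/andP[/supU2 supn _]] := eqVneq (D mu n c) 0.
    by rewrite scale0r big1 // => a _; rewrite big1 // => b _; rewrite mul0r scale0r.
  rewrite (hconv_seqE D_fin mulB _ _ uU supn) (mulB_suml mulB_linear) scaler_sumr.
  apply: eq_bigr => a _; rewrite (mulB_suml mulB_linear) scaler_sumr.
  by apply: eq_bigr => b _; rewrite (mulBZl mulB_linear) scalerA.
rewrite (hconv_seqE D_fin mulB _ _ uU supU).
under eq_bigr => n _ do under eq_bigr => c _ do rewrite expand.
rewrite exchange_big /=; under eq_bigr => c _ do rewrite exchange_big_rot.
rewrite exchange_big_rot; apply: eq_bigr => a _; apply: eq_bigr => b _.
by apply: eq_bigr => c _; rewrite scaler_suml.
Qed.

Lemma hconvA_expand_r : star f (star g h) mu =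
  \sum_(a <- U) \sum_(b <- U) \sum_(c <- U)
    (\sum_(s <- U) D mu a s * D s b c) *: mulB (f a) (mulB (g b) (h c)).
Proof.
have expand a s : D mu a s *: mulB (f a) (star g h s) = \sum_(b <- U) \sum_(c <- U)
    (D mu a s * D s b c) *: mulB (f a) (mulB (g b) (h c)).
  have [->|/(hsupp_coef D_fin)/andP[_ /supU2 sups]] := eqVneq (D mu a s) 0.
    by rewrite scale0r big1 // => b _; rewrite big1 // => c _; rewrite mul0r scale0r.
  rewrite (hconv_seqE D_fin mulB _ _ uU sups) (mulB_sumr mulBC mulB_linear) scaler_sumr.
  apply: eq_bigr => b _; rewrite (mulB_sumr mulBC mulB_linear) scaler_sumr.
  by apply: eq_bigr => c _; rewrite (mulBZr mulBC mulB_linear) scalerA.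
rewrite (hconv_seqE D_fin mulB _ _ uU supU); apply: eq_bigr => a _.
under eq_bigr => s _ do rewrite expand.
rewrite exchange_big_rot; apply: eq_bigr => b _; apply: eq_bigr => c _.
by rewrite scaler_suml.
Qed.

Lemma coassoc_seq a b c :
  \sum_(n <- U) D mu n c * D n a b = \sum_(s <- U) D mu a s * D s b c.
Proof.
rewrite -(fsbig_setT_seq (F := fun n => D mu n c * D n a b)) //; last first.
  by move=> n; rewrite mulf_eq0 negb_or => /andP[/(hsupp_coef D_fin)/andP[/supU]].
rewrite coassoc (fsbig_setT_seq (r := U)) // => s.
by rewrite mulf_eq0 negb_or => /andP[/(hsupp_coef D_fin)/andP[_ /supU]].
Qed.

End Associativity.

Lemma hconvA f g h : star (star f g) h = star f (star g h).
Proof.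
apply: funext => mu; have [U [uU supU supU2]] := hsupp_closure D mu.
rewrite (hconvA_expand_l f g h uU supU supU2) (hconvA_expand_r f g h uU supU supU2).
do 3 (apply: eq_bigr => ? _); by rewrite coassoc_seq // mulBA.
Qed.

End HopfConvolution.

Section Radius.
Variable K : numFieldType.

(* [radius c d <= min(1, d) / (1 + c)], written without [min], which the
   partially ordered field [K] lacks. *)
Definition radius (c d : K) : K := d / (1 + d) / (1 + c).

Variables (c d : K).
Hypotheses (c_ge0 : 0 <= c) (d_gt0 : 0 < d).

Let onec_gt0 : 0 < 1 + c. Proof. exact: ltr_wpDr c_ge0 ltr01. Qed.
Let oned_gt0 : 0 < 1 + d. Proof. exact: addr_gt0 ltr01 d_gt0. Qed.

Lemma radius_gt0 : 0 < radius c d.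
Proof. by rewrite !divr_gt0. Qed.

Lemma radius_le1 : radius c d <= 1.
Proof.
rewrite ler_pdivrMr // mul1r (@le_trans _ _ 1) ?lerDl //.
by rewrite ler_pdivrMr // mul1r lerDr ler01.
Qed.

Lemma mulr_radius_le x : 0 <= x <= 1 + c -> x * radius c d <= d.
Proof.
case/andP=> x_ge0 x_le.
have le1 : x / (1 + c) <= 1 by rewrite ler_pdivrMr ?mul1r.
have led : d / (1 + d) <= d by rewrite ler_pdivrMr // ler_peMr ?lerDl ?ltW.
have -> : x * radius c d = d / (1 + d) * (x / (1 + c)) by rewrite /radius; ring.
rewrite -[leRHS]mulr1.
by apply: ler_pM => //; rewrite divr_ge0 // ltW.
Qed.

End Radius.

Lemma abs_convex_sum3 (K : numFieldType) (M : choiceType) (B : normedModType K)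
    (V : set (M -> B)) (x y z : M -> B) :
  abs_convex V -> V (fun t => 3%:R *: x t) -> V (fun t => 3%:R *: y t) ->
  V (fun t => 3%:R *: z t) -> V (fun t => x t + y t + z t).
Proof.
move=> Vc Vx Vy Vz.
have n2 : (2%:R : K) != 0 by rewrite pnatr_eq0.
have n3 : (3%:R : K) != 0 by rewrite pnatr_eq0.
have -> : (fun t => x t + y t + z t) = (fun t => 3%:R^-1 *: (3%:R *: x t) +
    (2%:R / 3%:R) *: (2%:R^-1 *: (3%:R *: y t) + 2%:R^-1 *: (3%:R *: z t))).
  apply: funext => t; rewrite scalerDr !scalerA -addrA.
  by rewrite mulVf // [_ * _ * 3%:R](_ : _ = 1) ?scale1r //; field.
apply: (Vc) => //.
  by apply: Vc => //; rewrite ger0_norm ?invr_ge0 // (_ : _ + _ = 1) //; field.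
by rewrite !ger0_norm ?invr_ge0 ?divr_ge0 // (_ : _ + _ = 1) //; field.
Qed.

Section ControlledMaps.
Variables (K : numFieldType) (M : choiceType) (gr : M -> nat).
Variables (w : nat -> nat -> nat) (B : normedModType K).
Hypothesis w_gt0 : forall k n, (0 < w k n)%N.
Hypothesis w_monotone : forall k n, (w k n <= w k.+1 n)%N.

Local Notation bounded := (bounded_by gr w).
Local Notation controlled := (controlled gr w (B := B)).

Lemma w_le k k' n : (k <= k')%N -> (w k n <= w k' n)%N.
Proof. exact: (homo_leq (f := w^~ n) leqnn leq_trans (w_monotone^~ n)). Qed.

Lemma bounded_by_ge0 (t : M) k C (f : M -> B) : bounded k C f -> 0 <= C.
Proof.
by move/(_ t)/(le_trans (normr_ge0 _)); rewrite pmulr_lge0 // ltr0n.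
Qed.

Lemma bounded_by_le k k' C C' (f : M -> B) : (k <= k')%N -> C <= C' ->
  bounded k C f -> bounded k' C' f.
Proof.
move=> kk' CC' hf t; apply: le_trans (hf t) _.
by apply: ler_pM; rewrite ?ler0n ?ler_nat ?w_le // (bounded_by_ge0 t hf).
Qed.

Lemma bounded_by_comb k (a b X Y : K) (x y : M -> B) :
  bounded k X x -> bounded k Y y ->
  bounded k (`|a| * X + `|b| * Y) (fun t => a *: x t + b *: y t).
Proof.
move=> hx hy t; apply: le_trans (ler_normD _ _) _; rewrite !normrZ mulrDl.
by apply: lerD; rewrite -mulrA ler_wpM2l.
Qed.

Lemma controlled_same_level (x y : M -> B) : controlled x -> controlled y ->
  exists k X Y, bounded k X x /\ bounded k Y y.
Proof.
move=> [k1 [X hx]] [k2 [Y hy]]; exists (k1 + k2)%N, X, Y.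
by split; [apply: bounded_by_le (leq_addr k2 k1) (lexx _) hx |
           apply: bounded_by_le (leq_addl k1 k2) (lexx _) hy].
Qed.

Lemma controlled_comb (a b : K) x y : controlled x -> controlled y ->
  controlled (fun t => a *: x t + b *: y t).
Proof.
move=> /controlled_same_level /[apply] -[k [X [Y [hx hy]]]].
by exists k, (`|a| * X + `|b| * Y); apply: bounded_by_comb.
Qed.

Section Convolution.
Variables (mulB : B -> B -> B) (D : M -> M -> M -> K).
Hypothesis mulBC : commutative mulB.
Hypothesis mulB_linear :
  forall (a : K) x y z, mulB (a *: x + y) z = a *: mulB x z + mulB y z.
Hypothesis mulB_norm : forall x y, `|mulB x y| <= `|x| * `|y|.
Hypothesis D_fin : forall mu, finite_set [set p : M * M | D mu p.1 p.2 != 0].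
Variables (kk : nat -> nat) (CC : nat -> K).
Hypothesis CC_gt0 : forall k, 0 < CC k.
Hypothesis D_bound : forall k mu,
  \sum_(n <- hsupp D mu) \sum_(s <- hsupp D mu)
    `|D mu n s| * (w k (gr n))%:R * (w k (gr s))%:R <= CC k * (w (kk k) (gr mu))%:R.

Local Notation star := (hconv D mulB).

Lemma bounded_by_hconv k (X Y : K) (x y : M -> B) :
  bounded k X x -> bounded k Y y -> bounded (kk k) (X * Y * CC k) (star x y).
Proof.
move=> hx hy mu; have X0 := bounded_by_ge0 mu hx; have Y0 := bounded_by_ge0 mu hy.
rewrite (hconvE D_fin); apply: le_trans (ler_norm_sum _ _ _) _.
apply: le_trans (_ : \sum_(n <- hsupp D mu) \sum_(s <- hsupp D mu) X * Y *
    (`|D mu n s| * (w k (gr n))%:R * (w k (gr s))%:R) <= _).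
  apply: ler_sum => n _; apply: le_trans (ler_norm_sum _ _ _) _.
  apply: ler_sum => s _; rewrite normrZ.
  apply: le_trans (ler_wpM2l (normr_ge0 _) (mulB_norm _ _)) _.
  rewrite [leRHS](_ : _ = `|D mu n s| *
    ((X * (w k (gr n))%:R) * (Y * (w k (gr s))%:R))); last by ring.
  by apply: ler_wpM2l => //; apply: ler_pM.
under eq_bigr do rewrite -mulr_sumr.
by rewrite -mulr_sumr -[leRHS]mulrA; exact: ler_wpM2l (mulr_ge0 X0 Y0) _ _ (D_bound k mu).
Qed.

Lemma controlled_hconv x y : controlled x -> controlled y -> controlled (star x y).
Proof.
move=> /controlled_same_level /[apply] -[k [X [Y [hx hy]]]].
by exists (kk k), (X * Y * CC k); apply: bounded_by_hconv.
Qed.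

Section ContinuityAt.
Variables (f g : M -> B) (jf jg : nat) (F G : K).
Hypotheses (F_ge0 : 0 <= F) (G_ge0 : 0 <= G).
Hypotheses (f_bounded : bounded jf F f) (g_bounded : bounded jg G g).
Variables (V0 : set (M -> B)) (e : nat -> K).
Hypotheses (V0_absconv : abs_convex V0) (e_gt0 : forall k, 0 < e k).
Hypothesis V0_ball : forall k x, bounded k (e k) x -> V0 x.

(* The difference to control is a sum of three convolutions (abs_convex_sum3). *)
Let P x := V0 (fun t => 3%:R *: x t).
Let del m := e (kk m) / (3%:R * CC m).
(* Shifting the levels by [jf + jg] makes [f] and [g] available at each of them. *)
Let a k := radius (F + G) (del (k + (jf + jg))).

Let del_gt0 m : 0 < del m.
Proof. by rewrite divr_gt0 ?mulr_gt0 ?ltr0n. Qed.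

Let a_gt0 k : 0 < a k.
Proof. by rewrite radius_gt0 ?addr_ge0. Qed.

Let mul_a_le x k : 0 <= x <= 1 + (F + G) -> x * a k <= del (k + (jf + jg)).
Proof. exact/mulr_radius_le/del_gt0/addr_ge0. Qed.

Let P_absconv : abs_convex P.
Proof.
move=> al be x y Px Py hab; rewrite /P.
under eq_fun do rewrite scalerDr !scalerA [3%:R * al]mulrC [3%:R * be]mulrC -!scalerA.
exact: V0_absconv.
Qed.

Let P_hconv m (al be : K) x y : bounded m al x -> bounded m be y ->
  al * be <= del m -> P (star x y).
Proof.
move=> hx hy hab; rewrite /P; apply: (@V0_ball (kk m)) => t; rewrite normrZ normr_nat.
apply: le_trans (ler_wpM2l (ler0n _ 3) (bounded_by_hconv hx hy t)) _.
rewrite mulrA ler_wpM2r // [leRHS](_ : _ = 3%:R * (del m * CC m)); last first.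
  by rewrite /del; field; rewrite ?pnatr_eq0 ?gt_eqF.
by rewrite ler_wpM2l ?ler0n // ler_wpM2r // ltW.
Qed.

(* [V] consists of what pairs well with all of [U]; it contains the balls of
   radius [a l] because [U] is built to pair well with them. *)
Let U u := controlled u /\ P (star u g) /\
  forall l v, bounded l (a l) v -> P (star u v).
Let V v := controlled v /\ P (star f v) /\ forall u, U u -> P (star u v).

Let a_le1 k : a k <= 1.
Proof. by rewrite radius_le1 ?addr_ge0. Qed.

Let a_mul_le k l : a k * a l <= del (maxn k l + (jf + jg)).
Proof.
have a_le k' : 0 <= a k' <= 1 + (F + G).
  by rewrite ltW //= (le_trans (a_le1 k')) // lerDl addr_ge0.
by case: (leqP k l) => _; [|rewrite mulrC]; apply: mul_a_le.
Qed.

Let U_ball k u : bounded k (a k) u -> U u.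
Proof.
move=> hu; split; first by exists k, (a k).
split=> [|l v hv].
  have g_lift : (jg <= k + (jf + jg))%N by rewrite addnA leq_addl.
  apply: (P_hconv (bounded_by_le (leq_addr (jf + jg) k) (lexx _) hu)
                  (bounded_by_le g_lift (lexx _) g_bounded)).
  by rewrite mulrC; apply: mul_a_le; rewrite G_ge0 addrA lerDr addr_ge0.
apply: (P_hconv (m := maxn k l + (jf + jg))) (a_mul_le k l).
  exact: bounded_by_le (leq_trans (leq_maxl k l) (leq_addr _ _)) (lexx _) hu.
exact: bounded_by_le (leq_trans (leq_maxr k l) (leq_addr _ _)) (lexx _) hv.
Qed.

Let V_ball l v : bounded l (a l) v -> V v.
Proof.
move=> hv; split; first by exists l, (a l).
split=> [|u [_ [_ Hu]]]; last exact: Hu hv.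
have f_lift : (jf <= l + (jf + jg))%N by rewrite addnCA leq_addr.
apply: (P_hconv (bounded_by_le f_lift (lexx _) f_bounded)
                (bounded_by_le (leq_addr (jf + jg) l) (lexx _) hv)).
by apply: mul_a_le; rewrite F_ge0 addrCA lerDl addr_ge0.
Qed.

Let U_absconv : abs_convex U.
Proof.
move=> al be u1 u2 [E1 [P1 Q1]] [E2 [P2 Q2]] hab.
split; first exact: controlled_comb.
rewrite (hconv_linear_l mulB_linear D_fin); split; first exact: P_absconv.
by move=> l v hv; rewrite (hconv_linear_l mulB_linear D_fin); apply: P_absconv => //;
  [apply: Q1 | apply: Q2].
Qed.

Let V_absconv : abs_convex V.
Proof.
move=> al be v1 v2 [E1 [P1 Q1]] [E2 [P2 Q2]] hab.
split; first exact: controlled_comb.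
rewrite (hconv_linear_r mulBC mulB_linear D_fin); split; first exact: P_absconv.
by move=> u Uu; rewrite (hconv_linear_r mulBC mulB_linear D_fin);
  apply: P_absconv => //; [apply: Q1 | apply: Q2].
Qed.

Lemma hconv_continuous_at : exists U V, [/\ ind_nbhd0 gr w U, ind_nbhd0 gr w V &
  forall u v, U u -> V v ->
    V0 (fun t => star (fun x => f x + u x) (fun x => g x + v x) t - star f g t)].
Proof.
exists U, V; split.
- exists U; split => //; first by move=> u [].
  by move=> k; exists (a k); split; [exact: a_gt0 | exact: U_ball].
- exists V; split => //; first by move=> v [].
  by move=> l; exists (a l); split; [exact: a_gt0 | exact: V_ball].
move=> u v Uu [_ [Pfv Vv]].
rewrite (hconvDl mulB_linear D_fin) (hconvDr mulBC mulB_linear D_fin).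
under eq_fun do rewrite (hconvDr mulBC mulB_linear D_fin) addrAC
  (addrAC (star f g _)) subrr add0r addrA.
exact: abs_convex_sum3 V0_absconv Pfv Uu.2.1 (Vv u Uu).
Qed.

End ContinuityAt.

(* [t0] only shows that the bounds of [f] and [g] are nonnegative. *)
Lemma hconv_continuous (t0 : M) f g : controlled f -> controlled g ->
  forall W, ind_nbhd0 gr w W -> exists U V, [/\ ind_nbhd0 gr w U, ind_nbhd0 gr w V &
    forall u v, controlled u -> controlled v -> U u -> V v ->
      W (fun t => star (fun x => f x + u x) (fun x => g x + v x) t - star f g t)].
Proof.
move=> [jf [F hf]] [jg [G hg]] W [V0 [V0W _ V0_absconv V0_ball]].
have [e he] := choice V0_ball.
have [U [V [hU hV hUV]]] := hconv_continuous_at (bounded_by_ge0 t0 hf)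
  (bounded_by_ge0 t0 hg) hf hg V0_absconv (fun k => (he k).1) (fun k => (he k).2).
by exists U, V; split => // u v _ _ Uu Vv; apply/V0W/hUV.
Qed.

End Convolution.
End ControlledMaps.

Section RealScalars.
Variables (R : realType) (cplx : bool).
Local Notation K := (scal_field R cplx).

Definition real_scal : {rmorphism R -> K} :=
  match cplx return {rmorphism R -> scal_field R cplx} with
  | true => real_complex R
  | false => idfun
  end.

Lemma real_scal_knorm (a : K) : real_scal (knorm a) = `|a|.
Proof. by rewrite /real_scal /knorm; case: cplx a => a //=; rewrite normc_def. Qed.

Lemma ler_real_scal : {mono real_scal : x y / x <= y}.
Proof. by rewrite /real_scal; case: cplx => x y //=; rewrite lecR. Qed.

Lemma ltr_real_scal : {mono real_scal : x y / x < y}.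
Proof. by rewrite /real_scal; case: cplx => x y //=; rewrite ltcR. Qed.

Lemma knorm_ge0 (a : K) : 0 <= knorm a.
Proof. by rewrite -ler_real_scal rmorph0 real_scal_knorm. Qed.

Lemma knormM (a b : K) : knorm (a * b) = knorm a * knorm b.
Proof. by apply: (fmorph_inj real_scal); rewrite rmorphM !real_scal_knorm normrM. Qed.

Lemma knorm_real_scal x : 0 <= x -> knorm (real_scal x) = x.
Proof.
move=> x_ge0; apply: (fmorph_inj real_scal).
by rewrite real_scal_knorm ger0_norm // -(rmorph0 real_scal) ler_real_scal.
Qed.

Lemma knorm0 : knorm (0 : K) = 0.
Proof. by rewrite -(rmorph0 real_scal) knorm_real_scal. Qed.

End RealScalars.

Section WeightedL1.
Variables (R : realType) (cplx : bool) (J : choiceType) (gr : J -> nat).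
Variable w : nat -> nat -> nat.
Local Notation K := (scal_field R cplx).

Lemma l1norm_ge_sum k (c : J -> K) (r : seq J) : uniq r ->
  ((\sum_(t <- r) knorm (c t) * (w k (gr t))%:R)%:E <= l1norm gr w k c)%E.
Proof.
move=> ur; apply: esum_ge; exists [set` r]; first by split; [exact: finite_seq|].
by rewrite -sumEFin fsbig_seq.
Qed.

Lemma l1norm0 k : l1norm gr w k (fun _ => 0 : K) = 0%E.
Proof. by apply: esum1 => t _; rewrite knorm0 mul0r. Qed.

Lemma l1norm_dirac k (t0 : J) (x : R) : 0 <= x ->
  l1norm gr w k (fun t => if t == t0 then real_scal R cplx x else 0) =
  (x * (w k (gr t0))%:R)%:E.
Proof.
move=> x_ge0; rewrite /l1norm.
set a := fun t => _; transitivity (\esum_(t in [set t0]) a t).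
  rewrite [RHS]esum_mkcond; apply: eq_esum => t _; rewrite /a in_set1.
  by case: (eqVneq t t0) => // _; rewrite knorm0 mul0r.
by rewrite esum_set1 /a eqxx ?knorm_real_scal // lee_fin mulr_ge0.
Qed.

End WeightedL1.

Section ControlledCoproduct.
Variables (R : realType) (cplx : bool) (M : choiceType) (gr : M -> nat).
Variable w : nat -> nat -> nat.
Local Notation K := (scal_field R cplx).
Local Notation realK := (real_scal R cplx).
Variable D : M -> M -> M -> K.
Hypothesis w_gt0 : forall k n, (0 < w k n)%N.
Hypothesis w_supermul : forall k n m, (w k n * w k m <= w k (n + m))%N.
Hypothesis D_ext : extends_continuously gr (fun p : M * M => (gr p.1 + gr p.2)%N) w
  (fun mu p => D mu p.1 p.2).

Definition hcoef_mass (F : M -> M -> R) mu : R :=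
  \sum_(n <- hsupp D mu) \sum_(s <- hsupp D mu) knorm (D mu n s) * F n s.

Lemma hcoef_mass_le k mu :
  hcoef_mass (fun n s => (w k (gr n))%:R * (w k (gr s))%:R) mu <=
  hcoef_mass (fun n s => (w k (gr n + gr s))%:R) mu.
Proof.
apply: ler_sum => n _; apply: ler_sum => s _.
by rewrite ler_wpM2l ?knorm_ge0 // -natrM ler_nat.
Qed.

Lemma l1norm_hcoef_ge k mu x : 0 <= x ->
  ((x * hcoef_mass (fun n s => (w k (gr n + gr s))%:R) mu)%R%:E <=
   l1norm (fun p : M * M => (gr p.1 + gr p.2)%N) w k
     (fun p => realK x * D mu p.1 p.2)%R)%E.
Proof.
move=> x_ge0; have ur : uniq [seq (n, s) | n <- hsupp D mu, s <- hsupp D mu].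
  by apply: allpairs_uniq; rewrite ?hsupp_uniq // => -[? ?] [? ?] _ _ [-> ->].
apply: le_trans (l1norm_ge_sum _ _ _ _ ur); rewrite big_allpairs lee_fin /hcoef_mass mulr_sumr.
apply: ler_sum => n _; rewrite mulr_sumr; apply: ler_sum => s _.
by rewrite knormM knorm_real_scal ?mulrA.
Qed.

Lemma ext_dirac (T : (M -> K) -> M * M -> K) :
  (forall h, fin_supp h -> T h = fun p => \sum_(t \in [set: M]) h t * D t p.1 p.2) ->
  forall mu x, T (fun t => if t == mu then x else 0) = fun p => x * D mu p.1 p.2.
Proof.
move=> T_fin mu x; rewrite T_fin; last first.
  by apply: (sub_finite_set _ (finite_set1 mu)) => t /=; case: ifPn => [/eqP|]; rewrite ?eqxx.
apply: funext => p; rewrite (fsbig_setT_seq (r := [:: mu])) ?big_seq1 ?eqxx //.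
by move=> t; rewrite inE; case: ifPn => // _; rewrite mul0r eqxx.
Qed.

Lemma hcoef_bound_real k : exists k' (C : R), 0 < C /\ forall mu,
  hcoef_mass (fun n s => (w k (gr n))%:R * (w k (gr s))%:R) mu <= C * (w k' (gr mu))%:R.
Proof.
have [T [_ _ T_fin T_cont]] := D_ext.
have zero_l1 : in_l1_proj gr w (fun _ => 0 : K) by move=> j; rewrite /in_l1 l1norm0.
have [k' [d [d_gt0 T_cont0]]] := T_cont _ k 1 zero_l1 ltr01.
exists k', (2 / d); split=> [|mu]; first by rewrite divr_gt0.
(* Test continuity at [0] on [lam * mu], whose [k']-norm is [d / 2]. *)
set W : R := (w k' (gr mu))%:R; have W_gt0 : 0 < W by rewrite ltr0n.
set lam := d / (2 * W); have lam_gt0 : 0 < lam by rewrite divr_gt0 // mulr_gt0.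
set c := fun t => if t == mu then realK lam else 0.
have c_l1 j : l1norm gr w j c = (lam * (w j (gr mu))%:R)%:E.
  exact: l1norm_dirac (ltW lam_gt0).
have c_l1p : in_l1_proj gr w c by move=> j; rewrite /in_l1 c_l1 ltry.
have c_close : (l1norm gr w k' (fun t => (c t - 0)%R) < d%:E)%E.
  rewrite (_ : (fun t => c t - 0) = c); last by apply: funext => t; rewrite subr0.
  rewrite c_l1 lte_fin -/W (_ : lam * W = d / 2); first lra.
  by rewrite /lam; field; rewrite gt_eqF.
have T0 : T (fun _ => 0) = fun _ => 0.
  rewrite T_fin; last by apply: (sub_finite_set _ (finite_set1 mu)) => t /=; rewrite eqxx.
  by apply: funext => p; rewrite fsbig1 // => t _; rewrite mul0r.
have := T_cont0 c c_l1p c_close; rewrite (ext_dirac T_fin) T0.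
rewrite (_ : (fun p => _ - 0) = fun p => realK lam * D mu p.1 p.2); last first.
  by apply: funext => p; rewrite subr0.
move=> /(le_lt_trans (l1norm_hcoef_ge k mu (ltW lam_gt0))); rewrite lte_fin => far.
apply: le_trans (hcoef_mass_le k mu) _.
rewrite -(ler_pM2l lam_gt0) (_ : lam * (2 / d * W) = 1); first exact: ltW.
by rewrite /lam; field; rewrite !gt_eqF.
Qed.

Lemma hcoef_bound k : exists k' (C : K), 0 < C /\ forall mu,
  \sum_(n <- hsupp D mu) \sum_(s <- hsupp D mu)
    `|D mu n s| * (w k (gr n))%:R * (w k (gr s))%:R <= C * (w k' (gr mu))%:R.
Proof.
have [k' [C [C_gt0 HC]]] := hcoef_bound_real k.
exists k', (realK C); split=> [|mu]; first by rewrite -(rmorph0 realK) ltr_real_scal.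
have -> : \sum_(n <- hsupp D mu) \sum_(s <- hsupp D mu)
    `|D mu n s| * (w k (gr n))%:R * (w k (gr s))%:R =
    realK (hcoef_mass (fun n s => (w k (gr n))%:R * (w k (gr s))%:R) mu).
  rewrite rmorph_sum; apply: eq_bigr => n _; rewrite rmorph_sum; apply: eq_bigr => s _.
  by rewrite !rmorphM real_scal_knorm !rmorph_nat mulrA.
by rewrite -(rmorph_nat realK) -rmorphM ler_real_scal; apply: HC.
Qed.

End ControlledCoproduct.

Theorem proposition3p9
  (R : realType) (cplx : bool)
  (B : completeNormedModType (scal_field R cplx))
  (mulB : B -> B -> B) (oneB : B)
  (w : nat -> nat -> nat)
  (comm : bool) (Sig : choiceType) (deg : Sig -> nat)
  (D : mon comm Sig -> mon comm Sig -> mon comm Sig -> scal_field R cplx)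
  (ep : mon comm Sig -> scal_field R cplx)
  (Sa : mon comm Sig -> mon comm Sig -> scal_field R cplx) :
  comm_banach_alg mulB oneB ->
  growth_family w -> convex_growth R w ->
  comb_hopf deg D ep Sa ->
  (* control pair *)
  extends_continuously (mon_deg deg)
    (fun p : mon comm Sig * mon comm Sig => (mon_deg deg p.1 + mon_deg deg p.2)%N)
    w (fun mu p => D mu p.1 p.2) ->
  extends_continuously (mon_deg deg) (mon_deg deg) w Sa ->
  lc_unital_top_alg (mon_deg deg) w (hconv D mulB) (fun mu => ep mu *: oneB).
Proof.
move=> [mulBA mulBC mul1B mulB_linear [mulB_norm norm1]].
move=> [w_gt0 _ w_monotone w_supermul _] _ [D_fin [_ [coassoc [counit_l [counit_r]]]]].
move=> [_ [_ [_ [ep1 [_ [_ [_ [ep_deg connected]]]]]]]] D_ext _.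
have [kk /choice[CC hCC]] := choice (hcoef_bound w_gt0 w_supermul D_ext).
have CC_gt0 k := (hCC k).1; have D_bound k := (hCC k).2.
split.
- split=> [f g|]; first exact: controlled_hconv.
  exists 0%N, 1 => mu; rewrite normrZ mul1r.
  have [->|/ep_deg/connected ->] := eqVneq (ep mu) 0; first by rewrite normr0 mul0r ler0n.
  by rewrite ep1 normr1 norm1 mul1r ler1n.
- by move=> f g h _ _ _; apply: hconvA.
- by move=> f _; split; [apply: hconv1l | apply: hconv1r].
- by split=> a f f' g _ _ _; [apply: hconvZDl | apply: hconvZDr].
- move=> f g Ef Eg; exact: hconv_continuous (mon_one comm Sig) f g Ef Eg.
Qed.
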